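(* Let $f:\subseteq X\rightrightarrows Y$ be a diverse problem, i.e. for every $x\in\mathrm{dom}(f)$ there is $y\in\mathrm{dom}(f)$ with $f(x)\cap f(y)=\emptyset$. Then $f$ is strongly co-complete: for every problem $g$, $f\le_{sW}\overline g\iff f\le_{sW}g$. If moreover the representation $\delta_Y$ is total, then $f$ is strongly co-total: for every problem $g$, $f\le_{sW}\mathsf{T}g\iff f\le_{sW}g$.
   Context: Represented space $(X,\delta_X)$: set with surjective partial $\delta_X:\subseteq\mathbb{N}^\mathbb{N}\to X$. A problem $f:\subseteq X\rightrightarrows Y$ is a partial multi-valued map with nonempty values on its domain; $F\vdash f$ means $\delta_YF(p)\in f(\delta_X(p))$ whenever $\delta_X(p)\in\mathrm{dom}(f)$. $f\le_{sW}g$ iff there are computable partial $H,K:\subseteq\mathbb{N}^\mathbb{N}\to\mathbb{N}^\mathbb{N}$ with $HGK\vdash f$ for all $G\vdash g$. For $p\in\mathbb{N}^\mathbb{N}$, $p-1$ is the concatenation of $p(0)-1,p(1)-1,\dots$ with $0-1$ the empty word. The completion of $(X,\delta_X)$ is $\overline X=X\cup\{\bot\}$ with $\delta_{\overline X}(p)=\delta_X(p-1)$ if $p-1$ is an infinite sequence in $\mathrm{dom}(\delta_X)$, $\delta_{\overline X}(p)=\bot$ otherwise. For $g:\subseteq U\rightrightarrows V$, the completion $\overline g:\overline U\rightrightarrows\overline V$ is $\overline g(u)=g(u)$ for $u\in\mathrm{dom}(g)$ and $\overline V$ otherwise; the totalization $\mathsf{T}g:U\rightrightarrows V$ is $\mathsf{T}g(u)=g(u)$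 for $u\in\mathrm{dom}(g)$ and $V$ otherwise. *)

From Stdlib Require Import Arith List.
Import ListNotations.

Definition Baire := nat -> nat.

Inductive prcode : Type :=
| PZero : prcode
| PSucc : prcode
| PProj : nat -> prcode
| PComp : prcode -> list prcode -> prcode
| PPrec : prcode -> prcode -> prcode
| PMu : prcode -> prcode.

Inductive peval : prcode -> list nat -> nat -> Prop :=
| ev_zero : forall v, peval PZero v 0
| ev_succ : forall x v, peval PSucc (x :: v) (S x)
| ev_proj : forall i v, i < length v -> peval (PProj i) v (nth i v 0)
| ev_comp : forall f gs v ws y,
    pevals gs v ws -> peval f ws y -> peval (PComp f gs) v y
| ev_prec0 : forall b s v y, peval b v y -> peval (PPrec b s) (0 :: v) y
| ev_precS : forall b s n v y z,
    peval (PPrec b s) (n :: v) y -> peval s (n :: y :: v) z ->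
    peval (PPrec b s) (S n :: v) z
| ev_mu : forall f v n,
    peval f (n :: v) 0 ->
    (forall m, m < n -> exists k, peval f (m :: v) (S k)) ->
    peval (PMu f) v n
with pevals : list prcode -> list nat -> list nat -> Prop :=
| evs_nil : forall v, pevals [] v []
| evs_cons : forall g gs v w ws,
    peval g v w -> pevals gs v ws -> pevals (g :: gs) v (w :: ws).

(* Coding of finite words over nat by naturals (Cantor pairing). *)
Definition cpair (a b : nat) : nat := (a + b) * (a + b + 1) / 2 + b.
Fixpoint enc_word (w : list nat) : nat :=
  match w with [] => 0 | x :: l => S (cpair x (enc_word l)) end.
Definition prefix (p : Baire) (m : nat) : list nat := map p (seq 0 m).

Record pfun : Type := mkPfun { pdom : Baire -> Prop; papp : Baire -> Baire }.

(* Type-2 computability: output symbol n of H(p) is announced (as S k) by a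
   partial recursive function reading n and a finite prefix of p, and all
   announcements are correct. *)
Definition computable (H : pfun) : Prop :=
  exists c : prcode, forall p, pdom H p -> forall n,
    (exists m, peval c [n; enc_word (prefix p m)] (S (papp H p n))) /\
    (forall m k, peval c [n; enc_word (prefix p m)] (S k) -> k = papp H p n).

Definition compose3 (H G K : pfun) : pfun :=
  mkPfun (fun p => pdom K p /\ pdom G (papp K p) /\ pdom H (papp G (papp K p)))
         (fun p => papp H (papp G (papp K p))).

Definition rep_functional {X : Type} (d : Baire -> X -> Prop) : Prop :=
  forall p x x', d p x -> d p x' -> x = x'.
Definition rep_surjective {X : Type} (d : Baire -> X -> Prop) : Prop :=
  forall x, exists p, d p x.
Definition is_rep {X : Type} (d : Baire -> X -> Prop) : Prop :=
  rep_functional d /\ rep_surjective d.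
Definition rep_total {X : Type} (d : Baire -> X -> Prop) : Prop :=
  forall p, exists x, d p x.

(* A problem f :⊆ X ⇉ Y is a relation; dom f = {x | f(x) nonempty}. *)
Definition pdomain {X Y : Type} (f : X -> Y -> Prop) (x : X) : Prop :=
  exists y, f x y.

Definition realizes {X Y : Type} (dX : Baire -> X -> Prop) (dY : Baire -> Y -> Prop)
  (F : pfun) (f : X -> Y -> Prop) : Prop :=
  forall p x, dX p x -> pdomain f x ->
    pdom F p /\ exists y, dY (papp F p) y /\ f x y.

Definition sW_le {X Y U V : Type}
  (dX : Baire -> X -> Prop) (dY : Baire -> Y -> Prop) (f : X -> Y -> Prop)
  (dU : Baire -> U -> Prop) (dV : Baire -> V -> Prop) (g : U -> V -> Prop) : Prop :=
  exists H K : pfun, computable H /\ computable K /\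
    forall G : pfun, realizes dU dV G g -> realizes dX dY (compose3 H G K) f.

Fixpoint nz_count (p : Baire) (n : nat) : nat :=
  match n with
  | 0 => 0
  | S n' => nz_count p n' + (if Nat.eqb (p n') 0 then 0 else 1)
  end.

(* minus1 p q : p-1 is an infinite sequence and equals q. *)
Definition minus1 (p q : Baire) : Prop :=
  forall k, exists n, p n = S (q k) /\ nz_count p n = k.

Definition bar_delta {X : Type} (d : Baire -> X -> Prop) (p : Baire) (x : option X) : Prop :=
  match x with
  | Some x' => exists q, minus1 p q /\ d q x'
  | None => ~ (exists q x', minus1 p q /\ d q x')
  end.

Definition completion {U V : Type} (g : U -> V -> Prop) (u : option U) (v : option V) : Prop :=
  match u with
  | Some u' => (pdomain g u' -> exists v', v = Some v' /\ g u' v')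
  | None => True
  end.

Definition totalization {U V : Type} (g : U -> V -> Prop) (u : U) (v : V) : Prop :=
  (pdomain g u -> g u v).

Definition diverse {X Y : Type} (f : X -> Y -> Prop) : Prop :=
  forall x, pdomain f x -> exists y, pdomain f y /\ forall z, ~ (f x z /\ f y z).

(* Let H, K reduce a diverse f to a problem R, and let p name an instance x of f.  The
   question K(p) cannot be trivial for R (every answer correct, or no instance named): pick y
   with f(x) and f(y) disjoint and a name p' of y; a realizer of R may then be modified to
   answer K(p) as it answers K(p') (or K(p') as K(p)), and H would map both to one common
   solution of x and y.  For the completion of g a nontrivial question has the form q + 1
   with q naming an instance in dom g, so H(_ + 1) and K(_) - 1 reduce f to g; for the
   totalization the question already names an instance in dom g, and H, K themselves work.
   The converse directions hold for every f.  Most of the work is the computability of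
   p |-> p - 1, which needs an evaluator of codes with fuel that is itself computed by a code. *)

From Stdlib Require Import Arith List Lia Classical ClassicalEpsilon FunctionalExtensionality.
Import ListNotations.

Definition prcode_nested_ind (P : prcode -> Prop)
  (HZ : P PZero) (HS : P PSucc) (HP : forall i, P (PProj i))
  (HC : forall f gs, P f -> Forall P gs -> P (PComp f gs))
  (HR : forall b t, P b -> P t -> P (PPrec b t))
  (HM : forall f, P f -> P (PMu f)) : forall c, P c :=
  fix F c := match c with
  | PZero => HZ
  | PSucc => HS
  | PProj i => HP i
  | PComp f gs => HC f gs (F f)
      ((fix G gs := match gs return Forall P gs with
        | [] => Forall_nil _
        | g :: gs' => @Forall_cons _ P g gs' (F g) (G gs') end) gs)
  | PPrec b t => HR b t (F b) (F t)
  | PMu f => HM f (F f)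
  end.

Lemma pevals_functional gs :
  Forall (fun g => forall v y y', peval g v y -> peval g v y' -> y = y') gs ->
  forall v ws ws', pevals gs v ws -> pevals gs v ws' -> ws = ws'.
Proof.
  induction 1; intros v ws ws' H1 H2; inversion H1; inversion H2; subst; auto.
  f_equal; eauto.
Qed.

Lemma peval_functional c : forall v y y', peval c v y -> peval c v y' -> y = y'.
Proof.
  induction c as [| | i | f gs IHf IHgs | b t IHb IHt | f IHf] using prcode_nested_ind;
    intros v y y' H H'.
  - inversion H; inversion H'; auto.
  - inversion H; inversion H'; subst; congruence.
  - inversion H; inversion H'; subst; auto.
  - inversion H; inversion H'; subst.
    assert (ws = ws0) by (eapply pevals_functional; eauto). subst. eauto.
  - destruct v as [|n v]; [inversion H|].
    revert y y' H H'. induction n; intros y y' H H'.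
    + inversion H; inversion H'; subst; eauto.
    + inversion H; inversion H'; subst.
      assert (y0 = y1) by eauto. subst. eauto.
  - inversion H; inversion H'; subst.
    destruct (lt_eq_lt_dec y y') as [[Hl|]|Hl]; auto.
    + destruct (H7 _ Hl) as [k Hk]. specialize (IHf _ _ _ H1 Hk). discriminate.
    + destruct (H2 _ Hl) as [k Hk]. specialize (IHf _ _ _ H6 Hk). discriminate.
Qed.

(** * Evaluation with fuel *)

Fixpoint all_some (l : list (option nat)) : option (list nat) :=
  match l with
  | [] => Some []
  | o :: l' =>
      match o, all_some l' with Some w, Some ws => Some (w :: ws) | _, _ => None end
  end.

Fixpoint mu_search (F : nat -> option nat) (m fuel : nat) : option nat :=
  match fuel with
  | 0 => None
  | S fuel' =>
      match F m with
      | Some 0 => Some m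
      | Some (S _) => mu_search F (S m) fuel'
      | None => None
      end
  end.

Fixpoint prec_iter (B : option nat) (T : nat -> nat -> option nat) (n : nat) : option nat :=
  match n with
  | 0 => B
  | S n' => match prec_iter B T n' with Some y => T n' y | None => None end
  end.

(* The fuel [s] bounds every minimisation to [S s] steps, so evaluation is total. *)
Fixpoint eval_fuel (s : nat) (c : prcode) (v : list nat) {struct c} : option nat :=
  match c with
  | PZero => Some 0
  | PSucc => match v with x :: _ => Some (S x) | [] => None end
  | PProj i => if i <? length v then Some (nth i v 0) else None
  | PComp f gs =>
      match all_some (map (fun g => eval_fuel s g v) gs) with
      | Some ws => eval_fuel s f ws
      | None => None
      end
  | PPrec b t =>
      match v with
      | [] => None
      | n :: v' => prec_iter (eval_fuel s b v') (fun n' y => eval_fuel s t (n' :: y :: v')) n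
      end
  | PMu f => mu_search (fun m => eval_fuel s f (m :: v)) 0 (S s)
  end.

Lemma all_some_pevals gs (G : prcode -> option nat) v :
  Forall (fun g => forall y, G g = Some y -> peval g v y) gs ->
  forall ws, all_some (map G gs) = Some ws -> pevals gs v ws.
Proof.
  induction 1; simpl; intros ws E.
  - inversion E; constructor.
  - destruct (G x) eqn:Ex; [|discriminate].
    destruct (all_some (map G l)); [|discriminate].
    inversion E; subst. constructor; auto.
Qed.

Lemma mu_search_spec F fuel : forall m n, mu_search F m fuel = Some n ->
  F n = Some 0 /\ m <= n /\ forall k, m <= k < n -> exists j, F k = Some (S j).
Proof.
  induction fuel; simpl; intros m n E; [discriminate|].
  destruct (F m) as [[|j]|] eqn:Fm; try discriminate.
  - inversion E; subst. repeat split; auto. intros; lia.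
  - destruct (IHfuel _ _ E) as (A & B & C). repeat split; auto; try lia.
    intros k Hk. destruct (Nat.eq_dec k m); subst; eauto. apply C; lia.
Qed.

Lemma eval_fuel_sound c : forall s v y, eval_fuel s c v = Some y -> peval c v y.
Proof.
  induction c as [| | i | f gs IHf IHgs | b t IHb IHt | f IHf] using prcode_nested_ind;
    intros s v y E; cbn [eval_fuel] in E.
  - inversion E; constructor.
  - destruct v; inversion E; constructor.
  - destruct (i <? length v) eqn:L; inversion E. apply Nat.ltb_lt in L. constructor; auto.
  - destruct (all_some _) eqn:A; [|discriminate].
    econstructor; [|eauto].
    eapply all_some_pevals; [|eauto].
    eapply Forall_impl; [|exact IHgs]. simpl; intros; eauto.
  - destruct v as [|n v]; [discriminate|].
    revert y E. induction n; simpl; intros y E.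
    + constructor; eauto.
    + destruct (prec_iter _ _ n) eqn:P; [|discriminate].
      econstructor; eauto.
  - destruct (mu_search_spec _ _ _ _ E) as (A & _ & C).
    constructor; eauto. intros m Hm. destruct (C m) as [j Hj]; [lia|]. eauto.
Qed.

Lemma mu_search_mono (F F' : nat -> option nat) :
  (forall k z, F k = Some z -> F' k = Some z) ->
  forall fuel m y, mu_search F m fuel = Some y ->
  forall fuel', fuel <= fuel' -> mu_search F' m fuel' = Some y.
Proof.
  intros HF. induction fuel; simpl; intros m y E fuel' Hf; [discriminate|].
  destruct fuel' as [|fuel']; [lia|]. simpl.
  destruct (F m) as [[|j]|] eqn:Fm; try discriminate.
  - rewrite (HF _ _ Fm). auto.
  - rewrite (HF _ _ Fm). apply IHfuel; auto; lia.
Qed.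

Lemma all_some_mono gs (G G' : prcode -> option nat) :
  Forall (fun g => forall y, G g = Some y -> G' g = Some y) gs ->
  forall ws, all_some (map G gs) = Some ws -> all_some (map G' gs) = Some ws.
Proof.
  induction 1; simpl; intros ws E; auto.
  destruct (G x) eqn:Ex; [|discriminate].
  destruct (all_some (map G l)) eqn:El; [|discriminate].
  rewrite (H _ eq_refl), (IHForall _ eq_refl). auto.
Qed.

Lemma eval_fuel_succ c : forall s v y, eval_fuel s c v = Some y -> eval_fuel (S s) c v = Some y.
Proof.
  induction c as [| | i | f gs IHf IHgs | b t IHb IHt | f IHf] using prcode_nested_ind;
    intros s v y E; cbn [eval_fuel] in *; auto.
  - destruct (all_some _) eqn:A; [|discriminate].
    erewrite all_some_mono; [eauto| |eauto].
    eapply Forall_impl; [|exact IHgs]. simpl; intros; eauto.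
  - destruct v as [|n v]; [discriminate|].
    revert y E. induction n; simpl; intros y E; eauto.
    destruct (prec_iter _ _ n) eqn:P; [|discriminate]. rewrite (IHn _ eq_refl). eauto.
  - eapply mu_search_mono; [| exact E | lia]. simpl. intros; eauto.
Qed.

Lemma eval_fuel_mono c s s' v y : eval_fuel s c v = Some y -> s <= s' -> eval_fuel s' c v = Some y.
Proof. intros E H. induction H; auto using eval_fuel_succ. Qed.

Lemma mu_search_complete (F : nat -> option nat) n :
  F n = Some 0 -> forall fuel m, m <= n -> n - m < fuel ->
  (forall k, m <= k < n -> exists j, F k = Some (S j)) -> mu_search F m fuel = Some n.
Proof.
  intros Fn. induction fuel; intros m H1 H2 H3; [lia|]. simpl.
  destruct (Nat.eq_dec m n). { subst; rewrite Fn; auto. }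
  destruct (H3 m) as [j Hj]; [lia|]. rewrite Hj. apply IHfuel; try lia.
  intros; apply H3; lia.
Qed.

Lemma uniform_bound (P : nat -> nat -> Prop) n :
  (forall k s s', P s k -> s <= s' -> P s' k) ->
  (forall k, k < n -> exists s, P s k) -> exists s, forall k, k < n -> P s k.
Proof.
  intros Mono. induction n as [|n IH]; intros H; [exists 0; intros; lia|].
  destruct IH as [s1 H1]; [intros; apply H; lia|].
  destruct (H n) as [s2 H2]; [lia|].
  exists (s1 + s2). intros k Hk. destruct (Nat.eq_dec k n) as [->|].
  - apply (Mono _ s2); auto; lia.
  - apply (Mono _ s1); [apply H1|]; lia.
Qed.

Lemma all_some_complete gs v ws : pevals gs v ws ->
  Forall (fun g => forall y, peval g v y -> exists s, eval_fuel s g v = Some y) gs ->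
  exists s, all_some (map (fun g => eval_fuel s g v) gs) = Some ws.
Proof.
  induction 1 as [|g gs v w ws Hg Hgs IH]; intros IHgs; [exists 0; auto|].
  inversion IHgs as [|? ? Hg' Hrest]; subst. destruct (Hg' _ Hg) as [s1 E1].
  destruct (IH Hrest) as [s2 E2]. exists (s1 + s2). simpl.
  rewrite (eval_fuel_mono _ _ (s1 + s2) _ _ E1) by lia.
  erewrite (all_some_mono _ (fun g => eval_fuel s2 g v)); eauto.
  apply Forall_forall. intros; eapply eval_fuel_mono; eauto; lia.
Qed.

Lemma eval_fuel_complete c : forall v y, peval c v y -> exists s, eval_fuel s c v = Some y.
Proof.
  induction c as [| | i | f gs IHf IHgs | b t IHb IHt | f IHf] using prcode_nested_ind;
    intros v y H.
  - inversion H; subst; exists 0; reflexivity.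
  - inversion H; subst; exists 0; reflexivity.
  - inversion H; subst; exists 0; simpl. apply Nat.ltb_lt in H1. rewrite H1. auto.
  - inversion H; subst.
    destruct (all_some_complete gs v ws) as [s1 Hs1]; auto.
    { eapply Forall_impl; [|exact IHgs]. auto. }
    destruct (IHf _ _ H5) as [s2 Hs2]. exists (s1 + s2). simpl.
    erewrite (all_some_mono _ (fun g => eval_fuel s1 g v)); eauto.
    + eapply eval_fuel_mono; eauto; lia.
    + apply Forall_forall. intros; eapply eval_fuel_mono; eauto; lia.
  - destruct v as [|n v]; [inversion H|].
    revert y H. induction n; intros y H.
    + inversion H; subst. destruct (IHb _ _ H4) as [s E]. exists s; simpl; auto.
    + inversion H; subst. destruct (IHn _ H5) as [s1 E1]. destruct (IHt _ _ H6) as [s2 E2].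
      exists (s1 + s2). pose proof (eval_fuel_mono _ _ (s1 + s2) _ _ E1 ltac:(lia)) as E1'.
      simpl in E1' |- *. rewrite E1'. eapply eval_fuel_mono; eauto; lia.
  - inversion H; subst.
    destruct (IHf _ _ H1) as [s0 E0].
    destruct (uniform_bound (fun s k => exists j, eval_fuel s f (k :: v) = Some (S j)) y)
      as [s1 Hs1].
    { intros k s s' [j Hj] L. exists j. eapply eval_fuel_mono; eauto. }
    { intros k Hk. destruct (H2 k Hk) as [j Hj]. destruct (IHf _ _ Hj) as [s Hs]. eauto. }
    exists (s0 + s1 + y). cbn [eval_fuel]. apply mu_search_complete; try lia.
    + eapply eval_fuel_mono; eauto; lia.
    + intros k Hk. destruct (Hs1 k) as [j Hj]; [lia|]. exists j. eapply eval_fuel_mono; eauto; lia.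
Qed.

Notation "v # i" := (nth i v 0) (at level 2, left associativity).

Definition recursive (a : nat) (F : list nat -> nat) : Prop :=
  exists c, forall v, length v = a -> peval c v (F v).

Definition recursive1 (f : nat -> nat) := recursive 1 (fun v => f v#0).
Definition recursive2 (f : nat -> nat -> nat) := recursive 2 (fun v => f v#0 v#1).
Definition recursive3 (f : nat -> nat -> nat -> nat) := recursive 3 (fun v => f v#0 v#1 v#2).

Lemma recursive_ext a F G : recursive a F -> (forall v, length v = a -> F v = G v) -> recursive a G.
Proof. intros [c Hc] E. exists c. intros v L. rewrite <- E; auto. Qed.

Lemma recursive_const a k : recursive a (fun _ => k).
Proof.
  induction k as [|k [c Hc]].
  - exists PZero. intros; constructor.
  - exists (PComp PSucc [c]). intros v L.
    econstructor; [repeat constructor; auto|constructor].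
Qed.

Lemma recursive_proj a i : i < a -> recursive a (fun v => v#i).
Proof. intros H. exists (PProj i). intros v L. constructor. lia. Qed.

Lemma recursive_comp a F (Fs : list (list nat -> nat)) :
  recursive (length Fs) F -> Forall (recursive a) Fs ->
  recursive a (fun v => F (map (fun G => G v) Fs)).
Proof.
  intros [c Hc] HF.
  assert (exists cs, forall v, length v = a -> pevals cs v (map (fun G => G v) Fs)) as [cs Hcs].
  { clear Hc. induction HF as [|G Fs [c1 H1] _ [cs Hcs]].
    - exists []. intros; constructor.
    - exists (c1 :: cs). intros; simpl; constructor; auto. }
  exists (PComp c cs). intros v L. econstructor; eauto. apply Hc. rewrite length_map; auto.
Qed.

Lemma recursive_comp1 a f F : recursive1 f -> recursive a F -> recursive a (fun v => f (F v)).
Proof. intros Hf HF. apply (recursive_comp a (fun v => f v#0) [F]); auto. Qed.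

Lemma recursive_comp2 a f F G :
  recursive2 f -> recursive a F -> recursive a G -> recursive a (fun v => f (F v) (G v)).
Proof. intros Hf HF HG. apply (recursive_comp a (fun v => f v#0 v#1) [F; G]); auto. Qed.

Lemma recursive_comp3 a f F G H : recursive3 f -> recursive a F -> recursive a G ->
  recursive a H -> recursive a (fun v => f (F v) (G v) (H v)).
Proof.
  intros Hf HF HG HH. apply (recursive_comp a (fun v => f v#0 v#1 v#2) [F; G; H]); auto.
Qed.

Lemma recursive1_S : recursive1 S.
Proof. exists PSucc. intros [|x [|]] L; simpl in L; try lia. constructor. Qed.

Fixpoint primrec_scheme (G T : list nat -> nat) (n : nat) (v : list nat) : nat :=
  match n with 0 => G v | S n' => T (n' :: primrec_scheme G T n' v :: v) end.

Lemma recursive_primrec_scheme a G T : recursive a G -> recursive (S (S a)) T ->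
  recursive (S a) (fun v => primrec_scheme G T v#0 (tl v)).
Proof.
  intros [b Hb] [t Ht]. exists (PPrec b t). intros [|n v] L; simpl in L; [lia|]. simpl.
  induction n; simpl.
  - constructor. apply Hb; lia.
  - econstructor; eauto. apply Ht. simpl; lia.
Qed.

Lemma recursive2_by_recursion (f : nat -> nat -> nat) (g : nat -> nat)
  (t : nat -> nat -> nat -> nat) :
  recursive1 g -> recursive3 t -> (forall x, f 0 x = g x) ->
  (forall k x, f (S k) x = t k (f k x) x) -> recursive2 f.
Proof.
  intros Hg Ht E0 ES.
  eapply recursive_ext.
  { apply (recursive_primrec_scheme 1 (fun v => g v#0) (fun v => t v#0 v#1 v#2)); auto. }
  intros [|k [|x [|]]] L; simpl in L; try lia. simpl.
  induction k; simpl; auto. rewrite ES, IHk. auto.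
Qed.

Lemma recursive3_by_recursion (f : nat -> nat -> nat -> nat) (g : nat -> nat -> nat)
  (t : nat -> nat -> nat -> nat -> nat) :
  recursive2 g -> recursive 4 (fun v => t v#0 v#1 v#2 v#3) -> (forall x y, f 0 x y = g x y) ->
  (forall k x y, f (S k) x y = t k (f k x y) x y) -> recursive3 f.
Proof.
  intros Hg Ht E0 ES.
  eapply recursive_ext.
  { apply (recursive_primrec_scheme 2 (fun v => g v#0 v#1) (fun v => t v#0 v#1 v#2 v#3)); auto. }
  intros [|k [|x [|y [|]]]] L; simpl in L; try lia. simpl.
  induction k; simpl; auto. rewrite ES, IHk. auto.
Qed.

Create HintDb recursive.
#[export] Hint Resolve recursive1_S : recursive.

Ltac recursive_auto :=
  repeat match goal with
  | |- recursive _ (fun v => nth ?i v 0) => apply recursive_proj; simpl; lia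
  | |- recursive _ (fun _ => ?k) => apply recursive_const
  | |- recursive _ (fun v => ?f (@?F v) (@?G v) (@?H v)) =>
      apply (recursive_comp3 _ f F G H); [solve [auto with recursive]| | |]
  | |- recursive _ (fun v => ?f (@?F v) (@?G v)) =>
      apply (recursive_comp2 _ f F G); [solve [auto with recursive]| |]
  | |- recursive _ (fun v => ?f (@?F v)) =>
      apply (recursive_comp1 _ f F); [solve [auto with recursive]|]
  | |- Forall (recursive _) [] => apply Forall_nil
  | |- Forall (recursive _) (_ :: _) => apply Forall_cons
  | |- recursive1 _ => unfold recursive1
  | |- recursive2 _ => unfold recursive2
  | |- recursive3 _ => unfold recursive3
  end.

Definition ifz (x y z : nat) : nat := match x with 0 => y | S _ => z end.

Lemma recursive1_pred : recursive1 pred.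
Proof.
  eapply recursive_ext.
  { apply (recursive_primrec_scheme 0 (fun _ => 0) (fun v => v#0)); recursive_auto. }
  intros [|[|n] [|]] L; simpl in L; try lia; reflexivity.
Qed.

#[export] Hint Resolve recursive1_pred : recursive.

Lemma recursive2_add : recursive2 Nat.add.
Proof.
  eapply recursive_ext.
  { apply (recursive_primrec_scheme 1 (fun v => v#0) (fun v => S v#1)); recursive_auto. }
  intros [|n [|x [|]]] L; simpl in L; try lia. simpl.
  induction n; simpl; auto.
Qed.

Lemma recursive2_sub : recursive2 Nat.sub.
Proof.
  assert (Hflip : recursive2 (fun n x => x - n)).
  { eapply recursive_ext.
    { apply (recursive_primrec_scheme 1 (fun v => v#0) (fun v => pred v#1));
        recursive_auto. }
    intros [|n [|x [|]]] L; simpl in L; try lia. simpl.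
    induction n; simpl; [lia|]. rewrite IHn. lia. }
  eapply recursive_ext.
  { apply (recursive_comp2 2 (fun n x => x - n) (fun v => v#1) (fun v => v#0));
      [exact Hflip|recursive_auto..]. }
  reflexivity.
Qed.

Lemma recursive3_ifz : recursive3 ifz.
Proof.
  eapply recursive_ext.
  { apply (recursive_primrec_scheme 2 (fun v => v#0) (fun v => v#3)); recursive_auto. }
  intros [|[|n] [|y [|z [|]]]] L; simpl in L; try lia; reflexivity.
Qed.

#[export] Hint Resolve recursive2_add recursive2_sub recursive3_ifz : recursive.

Definition eqb_nat (x y : nat) : nat := Nat.b2n (x =? y).

Lemma recursive2_eqb_nat : recursive2 eqb_nat.
Proof.
  eapply recursive_ext.
  { apply (recursive_comp3 2 ifz (fun v => v#0 - v#1 + (v#1 - v#0)) (fun _ => 1) (fun _ => 0));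
      recursive_auto. }
  intros v _. unfold eqb_nat, ifz.
  destruct (v#0 =? v#1) eqn:E; [apply Nat.eqb_eq in E|apply Nat.eqb_neq in E];
    destruct (v#0 - v#1 + (v#1 - v#0)) eqn:F; simpl; auto; lia.
Qed.

#[export] Hint Resolve recursive2_eqb_nat : recursive.

Lemma map_proj_seq (v : list nat) k n :
  length v = k + n -> map (fun i => v#i) (seq k n) = skipn k v.
Proof.
  revert k. induction n; intros k L; simpl.
  - rewrite skipn_all2; auto; lia.
  - rewrite IHn by lia. clear IHn.
    revert v L. induction k; intros [|x v] L; simpl in *; try lia; auto.
Qed.

Lemma recursive_comp_skipn a k F (Gs : list (list nat -> nat)) :
  k <= a -> recursive (length Gs + (a - k)) F -> Forall (recursive a) Gs ->
  recursive a (fun v => F (map (fun G => G v) Gs ++ skipn k v)).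
Proof.
  intros Hk HF HGs. eapply recursive_ext.
  { apply (recursive_comp a F (Gs ++ map (fun i v => v#i) (seq k (a - k)))).
    - rewrite length_app, length_map, length_seq. auto.
    - apply Forall_app. split; auto.
      apply Forall_forall. intros G [i [<- Hi]]%in_map_iff.
      apply in_seq in Hi. apply recursive_proj. lia. }
  intros v L. cbv beta. rewrite map_app, map_map, map_proj_seq by lia. reflexivity.
Qed.

(** * The evaluator is recursive in the fuel *)

Definition enc_opt (o : option nat) : nat := match o with None => 0 | Some y => S y end.

Definition eval_coded (c : prcode) (v : list nat) : nat := enc_opt (eval_fuel v#0 c (tl v)).

Fixpoint all_nonzero (l : list nat) : nat :=
  match l with [] => 1 | r :: l' => ifz r 0 (all_nonzero l') end.

Lemma all_some_enc l ws : all_some l = Some ws ->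
  all_nonzero (map enc_opt l) = 1 /\ map (fun o => pred (enc_opt o)) l = ws.
Proof.
  revert ws; induction l as [|o l IH]; simpl; intros ws E.
  - inversion E; auto.
  - destruct o; [|discriminate]. destruct (all_some l); [|discriminate].
    inversion E; subst. destruct (IH _ eq_refl) as [-> ->]. auto.
Qed.

Lemma all_some_enc_none l : all_some l = None -> all_nonzero (map enc_opt l) = 0.
Proof.
  induction l as [|o l IH]; simpl; intros E; [discriminate|].
  destruct o; simpl; auto. destruct (all_some l); [discriminate|]. auto.
Qed.

Lemma recursive_all_nonzero a (Fs : list (list nat -> nat)) :
  Forall (recursive a) Fs -> recursive a (fun v => all_nonzero (map (fun G => G v) Fs)).
Proof. induction 1; simpl; recursive_auto; auto. Qed.

Lemma recursive_eval_comp f gs :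
  (forall a, recursive (S a) (eval_coded f)) ->
  Forall (fun g => forall a, recursive (S a) (eval_coded g)) gs ->
  forall a, recursive (S a) (eval_coded (PComp f gs)).
Proof.
  intros IHf IHgs a.
  set (Fs := map (fun g v => eval_coded g v) gs).
  assert (HFs : Forall (recursive (S a)) Fs).
  { apply Forall_map. eapply Forall_impl; [|exact IHgs]. intros g Hg; apply Hg. }
  assert (Hf : recursive (S a) (fun v => eval_coded f (v#0 :: map (fun G => pred (G v)) Fs))).
  { eapply recursive_ext.
    { apply (recursive_comp (S a) (eval_coded f)
        ((fun v => v#0) :: map (fun G v => pred (G v)) Fs)).
      - simpl. rewrite length_map. apply IHf.
      - constructor; [apply recursive_proj; lia|]. apply Forall_map.
        eapply Forall_impl; [|exact HFs]. intros G HG. recursive_auto. auto. }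
    intros v _. simpl. rewrite map_map. reflexivity. }
  eapply recursive_ext.
  { apply (recursive_comp3 (S a) ifz _ (fun _ => 0) _ recursive3_ifz
      (recursive_all_nonzero _ _ HFs) (recursive_const _ 0) Hf). }
  intros [|s v] L; simpl in L; [lia|]. unfold Fs, eval_coded. cbn [eval_fuel nth tl].
  rewrite !map_map. simpl.
  destruct (all_some (map (fun g => eval_fuel s g v) gs)) eqn:A.
  - destruct (all_some_enc _ _ A) as [B C]. rewrite map_map in B, C. rewrite B, C. reflexivity.
  - pose proof (all_some_enc_none _ A) as B. rewrite map_map in B. rewrite B. reflexivity.
Qed.

Definition prec_step (t : prcode) (w : list nat) : nat :=
  ifz w#1 0 (eval_coded t (w#2 :: w#0 :: pred w#1 :: skipn 3 w)).

Lemma primrec_scheme_prec_iter b t s n v :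
  primrec_scheme (eval_coded b) (prec_step t) n (s :: v) =
  enc_opt (prec_iter (eval_fuel s b v) (fun n' y => eval_fuel s t (n' :: y :: v)) n).
Proof.
  induction n; simpl; [reflexivity|]. unfold prec_step at 1. simpl. rewrite IHn.
  destruct (prec_iter _ _ n); reflexivity.
Qed.

Lemma recursive_eval_prec b t :
  (forall a, recursive (S a) (eval_coded b)) -> (forall a, recursive (S a) (eval_coded t)) ->
  forall a, recursive (S a) (eval_coded (PPrec b t)).
Proof.
  intros IHb IHt [|a].
  { eapply recursive_ext; [apply (recursive_const 1 0)|].
    intros [|s [|]] L; simpl in L; try lia; reflexivity. }
  assert (HT : recursive (S (S (S a))) (prec_step t)).
  { unfold prec_step. recursive_auto.
    apply (recursive_comp_skipn _ 3 _ [fun w => w#2; fun w => w#0; fun w => pred w#1]);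
      [lia|apply IHt|recursive_auto]. }
  eapply recursive_ext.
  { apply (recursive_comp_skipn (S (S a)) 2
      (fun u => primrec_scheme (eval_coded b) (prec_step t) u#0 (tl u))
      [fun v => v#1; fun v => v#0]);
      [lia|apply recursive_primrec_scheme; [|simpl; rewrite Nat.sub_0_r]; auto|recursive_auto]. }
  intros [|s [|n v]] L; simpl in L; try lia. simpl. apply primrec_scheme_prec_iter.
Qed.

(* State of the search for [PMu]: 1 while searching, 0 once an argument fails to
   evaluate, and [S (S m)] once [m] is found. *)
Definition mu_step (e k st : nat) : nat :=
  ifz (pred st) (ifz st 0 (ifz e 0 (ifz (pred e) (S (S k)) 1))) st.

Lemma recursive3_mu_step : recursive3 mu_step.
Proof. unfold mu_step. recursive_auto. Qed.

#[export] Hint Resolve recursive3_mu_step : recursive.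

Fixpoint mu_scan (F : nat -> option nat) (n : nat) : nat :=
  match n with 0 => 1 | S k => mu_step (enc_opt (F k)) k (mu_scan F k) end.

Lemma mu_scan_stable F k i : mu_scan F k <> 1 -> mu_scan F (k + i) = mu_scan F k.
Proof.
  intros E. induction i; [rewrite Nat.add_0_r; auto|].
  rewrite Nat.add_succ_r. simpl. rewrite IHi. unfold mu_step, ifz.
  destruct (mu_scan F k) as [|[|]]; auto. contradiction.
Qed.

Lemma mu_scan_search F j : forall m, mu_scan F m = 1 ->
  pred (mu_scan F (m + j)) = enc_opt (mu_search F m j).
Proof.
  induction j; intros m E; [rewrite Nat.add_0_r, E; auto|].
  rewrite Nat.add_succ_r, <- Nat.add_succ_l. cbn [mu_search].
  assert (Sm : mu_scan F (S m) = ifz (enc_opt (F m)) 0 (ifz (pred (enc_opt (F m))) (S (S m)) 1))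
    by (cbn [mu_scan]; rewrite E; reflexivity).
  destruct (F m) as [[|]|] eqn:Fm.
  - rewrite mu_scan_stable, Sm; [reflexivity|]. rewrite Sm. discriminate.
  - apply IHj. auto.
  - rewrite mu_scan_stable, Sm; [reflexivity|]. rewrite Sm. discriminate.
Qed.

Lemma recursive_eval_mu f :
  (forall a, recursive (S a) (eval_coded f)) -> forall a, recursive (S a) (eval_coded (PMu f)).
Proof.
  intros IHf a.
  set (T := fun w => mu_step (eval_coded f (w#2 :: w#0 :: skipn 3 w)) w#0 w#1).
  assert (HT : recursive (S (S (S a))) T).
  { unfold T. recursive_auto.
    apply (recursive_comp_skipn _ 3 _ [fun w => w#2; fun w => w#0]);
      [lia|apply IHf|recursive_auto]. }
  assert (Hscan : forall s v n, primrec_scheme (fun _ => 1) T n (s :: v) =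
                    mu_scan (fun k => eval_fuel s f (k :: v)) n).
  { intros s v n. induction n; simpl; auto. rewrite IHn. reflexivity. }
  eapply recursive_ext.
  { apply (recursive_comp1 (S a) pred); [auto with recursive|].
    apply (recursive_comp_skipn (S a) 0 (fun u => primrec_scheme (fun _ => 1) T u#0 (tl u))
      [fun v => S v#0]);
      [lia|apply recursive_primrec_scheme; [apply recursive_const|auto]|
       recursive_auto]. }
  intros [|s v] L; simpl in L; [lia|].
  change (pred (primrec_scheme (fun _ => 1) T (S s) (s :: v)) = eval_coded (PMu f) (s :: v)).
  rewrite Hscan. exact (mu_scan_search _ (S s) 0 eq_refl).
Qed.

Lemma recursive_eval_coded c : forall a, recursive (S a) (eval_coded c).
Proof.
  induction c as [| | i | f gs IHf IHgs | b t IHb IHt | f IHf] using prcode_nested_ind; intros a.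
  - eapply recursive_ext; [apply (recursive_const _ 1)|]. reflexivity.
  - destruct a as [|a].
    + eapply recursive_ext; [apply (recursive_const _ 0)|].
      intros [|s [|]] L; simpl in L; try lia; reflexivity.
    + eapply recursive_ext; [apply (recursive_comp1 _ S (fun v => S v#1)); recursive_auto|].
      intros [|s [|x v]] L; simpl in L; try lia; reflexivity.
  - destruct (Nat.ltb_spec i a) as [Hi|Hi].
    + eapply recursive_ext; [apply (recursive_comp1 _ S (fun v => v#(S i))); recursive_auto|].
      intros [|s v] L; simpl in L; [lia|]. unfold eval_coded. simpl.
      replace (i <? length v) with true; [reflexivity|]. symmetry. apply Nat.ltb_lt. lia.
    + eapply recursive_ext; [apply (recursive_const _ 0)|].
      intros [|s v] L; simpl in L; [lia|]. unfold eval_coded. simpl.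
      replace (i <? length v) with false; [reflexivity|]. symmetry. apply Nat.ltb_ge. lia.
  - apply recursive_eval_comp; auto.
  - apply recursive_eval_prec; auto.
  - apply recursive_eval_mu; auto.
Qed.

(** * Coded words *)

Fixpoint tri (k : nat) : nat := match k with 0 => 0 | S k' => tri k' + S k' end.

Lemma recursive1_tri : recursive1 tri.
Proof.
  eapply recursive_ext.
  { apply (recursive_primrec_scheme 0 (fun _ => 0) (fun v => v#1 + S v#0)); recursive_auto. }
  intros [|k [|]] L; simpl in L; try lia. simpl. induction k; simpl; auto.
Qed.

#[export] Hint Resolve recursive1_tri : recursive.

Lemma cpair_tri a b : cpair a b = tri (a + b) + b.
Proof.
  assert (Htri : forall k, 2 * tri k = k * (k + 1)) by (induction k; simpl tri; lia).
  unfold cpair. f_equal. rewrite <- Htri, Nat.mul_comm. apply Nat.div_mul. lia.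
Qed.

Lemma tri_mono a b : a <= b -> tri a <= tri b.
Proof. induction 1; simpl; lia. Qed.

Fixpoint tri_root (z : nat) : nat :=
  match z with
  | 0 => 0
  | S z' => ifz (tri (S (tri_root z')) - S z') (S (tri_root z')) (tri_root z')
  end.

Lemma recursive1_tri_root : recursive1 tri_root.
Proof.
  eapply recursive_ext.
  { apply (recursive_primrec_scheme 0 (fun _ => 0)
      (fun v => ifz (tri (S v#1) - S v#0) (S v#1) v#1)); recursive_auto. }
  intros [|k [|]] L; simpl in L; try lia. simpl. induction k; simpl; auto. rewrite IHk; auto.
Qed.

#[export] Hint Resolve recursive1_tri_root : recursive.

Lemma tri_root_spec z : tri (tri_root z) <= z < tri (S (tri_root z)).
Proof.
  induction z; simpl; [lia|]. unfold ifz.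
  destruct (tri (tri_root z) + S (tri_root z) - S z) eqn:E; simpl in *; lia.
Qed.

Lemma tri_root_unique z d : tri d <= z < tri (S d) -> tri_root z = d.
Proof.
  intros H. pose proof (tri_root_spec z).
  destruct (lt_eq_lt_dec (tri_root z) d) as [[L|]|L]; auto.
  - pose proof (tri_mono (S (tri_root z)) d L). lia.
  - pose proof (tri_mono (S d) (tri_root z) L). lia.
Qed.

Definition cpair_snd (z : nat) : nat := z - tri (tri_root z).
Definition cpair_fst (z : nat) : nat := tri_root z - cpair_snd z.

Lemma cpair_snd_cpair a b : cpair_snd (cpair a b) = b.
Proof.
  unfold cpair_snd. rewrite (tri_root_unique _ (a + b)); rewrite cpair_tri; simpl; lia.
Qed.

Lemma cpair_fst_cpair a b : cpair_fst (cpair a b) = a.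
Proof.
  unfold cpair_fst. rewrite cpair_snd_cpair, (tri_root_unique _ (a + b));
    rewrite ?cpair_tri; simpl; lia.
Qed.

Definition word_hd (w : nat) : nat := cpair_fst (pred w).
Definition word_tl (w : nat) : nat := cpair_snd (pred w).
Definition word_cons (x w : nat) : nat := S (cpair x w).

Lemma recursive1_word_hd : recursive1 word_hd.
Proof. unfold word_hd, cpair_fst, cpair_snd. recursive_auto. Qed.

Lemma recursive1_word_tl : recursive1 word_tl.
Proof. unfold word_tl, cpair_snd. recursive_auto. Qed.

Lemma recursive2_word_cons : recursive2 word_cons.
Proof.
  unfold word_cons. eapply recursive_ext.
  { apply (recursive_comp1 _ S (fun v => tri (v#0 + v#1) + v#1)); recursive_auto. }
  intros v _. rewrite cpair_tri. reflexivity.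
Qed.

#[export] Hint Resolve recursive1_word_hd recursive1_word_tl recursive2_word_cons : recursive.

Lemma word_hd_enc x l : word_hd (enc_word (x :: l)) = x.
Proof. apply cpair_fst_cpair. Qed.

Lemma word_tl_enc x l : word_tl (enc_word (x :: l)) = enc_word l.
Proof. apply cpair_snd_cpair. Qed.

Lemma length_le_enc_word l : length l <= enc_word l.
Proof. induction l; simpl; auto. rewrite cpair_tri. lia. Qed.

Definition word_drop (k w : nat) : nat := Nat.iter k word_tl w.

Lemma recursive2_word_drop : recursive2 word_drop.
Proof.
  apply (recursive2_by_recursion word_drop (fun x => x) (fun _ r _ => word_tl r));
    auto; recursive_auto.
Qed.

#[export] Hint Resolve recursive2_word_drop : recursive.

Lemma word_drop_enc k l : word_drop k (enc_word l) = enc_word (skipn k l).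
Proof.
  revert l. induction k; intros l; auto.
  unfold word_drop in *. rewrite Nat.iter_succ_r. destruct l as [|x l].
  - change (word_tl (enc_word [])) with (enc_word []). rewrite IHk, skipn_nil. reflexivity.
  - rewrite word_tl_enc, IHk. reflexivity.
Qed.

Fixpoint fold_prefix (step : nat -> nat -> nat) (w k : nat) : nat :=
  match k with
  | 0 => 0
  | S k' => ifz (word_drop k' w) (fold_prefix step w k')
              (step (fold_prefix step w k') (word_hd (word_drop k' w)))
  end.

(* A word coded by [w] has at most [w] letters, so [w] steps suffice. *)
Definition word_fold (step : nat -> nat -> nat) (w : nat) : nat := fold_prefix step w w.

Lemma recursive1_word_fold step : recursive2 step -> recursive1 (word_fold step).
Proof.
  intros Hs.
  assert (Hf : recursive2 (fun k w => fold_prefix step w k)).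
  { apply (recursive2_by_recursion (fun k w => fold_prefix step w k) (fun _ => 0)
      (fun k a w => ifz (word_drop k w) a (step a (word_hd (word_drop k w))))); auto;
      recursive_auto. }
  unfold word_fold. eapply recursive_ext.
  { apply (recursive_comp2 1 (fun k w => fold_prefix step w k) (fun v => v#0) (fun v => v#0));
      auto; recursive_auto. }
  reflexivity.
Qed.

#[export] Hint Extern 1 (recursive1 (word_fold _)) =>
  apply recursive1_word_fold; recursive_auto : recursive.

Lemma fold_prefix_spec step l k :
  k <= length l -> fold_prefix step (enc_word l) k = fold_left step (firstn k l) 0.
Proof.
  induction k; intros H; [reflexivity|]. cbn [fold_prefix].
  rewrite IHk, word_drop_enc by lia.
  destruct (skipn k l) as [|x r] eqn:E.
  - apply (f_equal (@length nat)) in E. rewrite length_skipn in E. simpl in E. lia.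
  - change (ifz (enc_word (x :: r)) ?a ?b) with b. rewrite word_hd_enc.
    assert (F : firstn (S k) l = firstn k l ++ [x]).
    { rewrite <- (firstn_skipn k l) at 1. rewrite E, firstn_app, length_firstn, firstn_firstn.
      replace (S k - Nat.min k (length l)) with 1 by lia.
      replace (Nat.min (S k) k) with k by lia. reflexivity. }
    rewrite F, fold_left_app. reflexivity.
Qed.

Lemma word_fold_spec step l : word_fold step (enc_word l) = fold_left step l 0.
Proof.
  assert (Hk : forall k, length l <= k -> fold_prefix step (enc_word l) k = fold_left step l 0).
  { induction 1 as [|k H IH].
    - rewrite fold_prefix_spec, firstn_all; auto.
    - simpl. rewrite IH, word_drop_enc, skipn_all2 by lia. reflexivity. }
  apply Hk, length_le_enc_word.
Qed.

Definition word_rev : nat -> nat := word_fold (fun acc x => word_cons x acc).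

Lemma recursive1_word_rev : recursive1 word_rev.
Proof. unfold word_rev. recursive_auto. Qed.

#[export] Hint Resolve recursive1_word_rev : recursive.

Lemma word_rev_enc l : word_rev (enc_word l) = enc_word (rev l).
Proof.
  unfold word_rev. rewrite word_fold_spec.
  change 0 with (enc_word []). rewrite <- (app_nil_r (rev l)).
  generalize (@nil nat). induction l as [|x l IH]; intros a; simpl; auto.
  rewrite <- app_assoc. apply (IH (x :: a)).
Qed.

Lemma fold_left_rev_flip (f : nat -> nat -> nat) l a :
  fold_left f (rev l) a = fold_right (fun x y => f y x) a l.
Proof.
  revert a. induction l; intros a0; simpl; auto. rewrite fold_left_app. simpl. rewrite IHl. auto.
Qed.

Definition word_map_S (w : nat) : nat := word_fold (fun acc x => word_cons (S x) acc) (word_rev w).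

Lemma recursive1_word_map_S : recursive1 word_map_S.
Proof.
  unfold word_map_S. recursive_auto.
Qed.

Lemma word_map_S_enc l : word_map_S (enc_word l) = enc_word (map S l).
Proof.
  unfold word_map_S. rewrite word_rev_enc, word_fold_spec, fold_left_rev_flip.
  induction l; simpl; auto. rewrite IHl. reflexivity.
Qed.

Fixpoint list_minus1 (l : list nat) : list nat :=
  match l with
  | [] => []
  | 0 :: l' => list_minus1 l'
  | S y :: l' => y :: list_minus1 l'
  end.

Definition word_minus1 (w : nat) : nat :=
  word_fold (fun acc x => ifz x acc (word_cons (pred x) acc)) (word_rev w).

Lemma recursive1_word_minus1 : recursive1 word_minus1.
Proof.
  unfold word_minus1. recursive_auto.
Qed.

Lemma word_minus1_enc l : word_minus1 (enc_word l) = enc_word (list_minus1 l).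
Proof.
  unfold word_minus1. rewrite word_rev_enc, word_fold_spec, fold_left_rev_flip.
  induction l as [|[|x] l IH]; simpl; auto. rewrite IH. reflexivity.
Qed.

Definition word_dropr (k w : nat) : nat := word_rev (word_drop k (word_rev w)).

Lemma recursive2_word_dropr : recursive2 word_dropr.
Proof. unfold word_dropr. recursive_auto. Qed.

#[export] Hint Resolve recursive2_word_dropr : recursive.

Lemma length_prefix p m : length (prefix p m) = m.
Proof. unfold prefix. rewrite length_map, length_seq. auto. Qed.

Lemma firstn_prefix p m k : k <= m -> firstn k (prefix p m) = prefix p k.
Proof.
  intros H. unfold prefix. rewrite firstn_map. f_equal.
  replace m with (k + (m - k)) by lia. rewrite seq_app, firstn_app, length_seq, Nat.sub_diag.
  simpl. rewrite app_nil_r. apply firstn_all2. rewrite length_seq; auto.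
Qed.

Lemma word_dropr_prefix p m k : word_dropr k (enc_word (prefix p m)) = enc_word (prefix p (m - k)).
Proof.
  unfold word_dropr. rewrite word_rev_enc, word_drop_enc, word_rev_enc, skipn_rev, rev_involutive.
  rewrite length_prefix, firstn_prefix; auto. lia.
Qed.

Definition plus1 (p : Baire) : Baire := fun n => S (p n).

Lemma prefix_plus1 p m : prefix (plus1 p) m = map S (prefix p m).
Proof. unfold prefix. rewrite map_map. reflexivity. Qed.

Lemma nz_count_mono r a b : a <= b -> nz_count r a <= nz_count r b.
Proof. induction 1; simpl; lia. Qed.

Lemma nz_count_S r n : r n <> 0 -> nz_count r (S n) = S (nz_count r n).
Proof. intros H. simpl. destruct (Nat.eqb_spec (r n) 0); lia. Qed.

Lemma nz_count_inj r n1 n2 : r n1 <> 0 -> r n2 <> 0 -> nz_count r n1 = nz_count r n2 -> n1 = n2.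
Proof.
  intros H1 H2 E. destruct (lt_eq_lt_dec n1 n2) as [[L|]|L]; auto.
  - pose proof (nz_count_mono r (S n1) n2 L). rewrite nz_count_S in H; auto. lia.
  - pose proof (nz_count_mono r (S n2) n1 L). rewrite nz_count_S in H; auto. lia.
Qed.

Lemma minus1_at r q j : minus1 r q -> r j <> 0 -> r j = S (q (nz_count r j)).
Proof.
  intros M H. destruct (M (nz_count r j)) as [n [A B]].
  assert (n = j) by (apply nz_count_inj with r; auto; lia). subst; auto.
Qed.

Lemma minus1_functional r q1 q2 : minus1 r q1 -> minus1 r q2 -> q1 = q2.
Proof.
  intros M1 M2. apply functional_extensionality. intros k. destruct (M1 k) as [n [A B]].
  pose proof (minus1_at r q2 n M2) as C. rewrite A, B in C. specialize (C ltac:(lia)). lia.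
Qed.

Lemma minus1_plus1 q : minus1 (plus1 q) q.
Proof.
  intros k. exists k. split; auto. unfold plus1.
  induction k; simpl; auto. rewrite IHk. simpl. lia.
Qed.

Lemma list_minus1_prefix r q M : minus1 r q -> list_minus1 (prefix r M) = prefix q (nz_count r M).
Proof.
  intros Mq. induction M; [reflexivity|].
  assert (A : forall l x, list_minus1 (l ++ [x]) = list_minus1 l ++ list_minus1 [x]).
  { induction l as [|[|a] l IH]; intros; simpl; rewrite ?IH; auto. }
  unfold prefix in *. rewrite seq_S, map_app. cbn [nz_count map plus].
  rewrite A, IHM. destruct (r M) eqn:E; simpl.
  - rewrite app_nil_r, Nat.add_0_r. auto.
  - rewrite Nat.add_1_r, seq_S, map_app. simpl.
    pose proof (minus1_at r q M Mq) as C. rewrite E in C. specialize (C ltac:(lia)).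
    injection C as <-. auto.
Qed.

Definition minus1_fun (r : Baire) : Baire := epsilon (inhabits r) (minus1 r).

Lemma minus1_fun_spec r q : minus1 r q -> minus1_fun r = q.
Proof.
  intros M. apply (minus1_functional r); auto.
  apply (epsilon_spec (inhabits r) (minus1 r)). eauto.
Qed.

Lemma peval_PComp_inv f gs v y :
  peval (PComp f gs) v y -> exists ws, pevals gs v ws /\ peval f ws y.
Proof. intros H; inversion H; subst; eauto. Qed.

Lemma pevals_cons_inv g gs v ws :
  pevals (g :: gs) v ws -> exists w ws', ws = w :: ws' /\ peval g v w /\ pevals gs v ws'.
Proof. intros H; inversion H; subst; eauto 6. Qed.

Lemma pevals_nil_inv v ws : pevals [] v ws -> ws = [].
Proof. intros H; inversion H; auto. Qed.

Lemma peval_PProj_inv i v y : peval (PProj i) v y -> y = v#i.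
Proof. intros H; inversion H; auto. Qed.

Lemma recursive1_code f : recursive1 f -> exists c, forall x y, peval c [x] y <-> y = f x.
Proof.
  intros [c Hc]. exists c. intros x y. split.
  - intros Hy. eapply peval_functional; [exact Hy|]. apply (Hc [x]); auto.
  - intros ->. apply (Hc [x]); auto.
Qed.

Lemma computable_precomp (H : pfun) (T : nat -> nat) (phi : Baire -> Baire) (D : Baire -> Prop) :
  computable H -> recursive1 T ->
  (forall p, D p -> pdom H (phi p)) ->
  (forall p, D p -> forall m, exists m',
     T (enc_word (prefix p m')) = enc_word (prefix (phi p) m)) ->
  (forall p, D p -> forall m', exists m,
     T (enc_word (prefix p m')) = enc_word (prefix (phi p) m)) ->
  computable (mkPfun D (fun p => papp H (phi p))).
Proof.
  intros [c Hc] HT Hdom Henough Hsound. destruct (recursive1_code T HT) as [cT HcT].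
  exists (PComp c [PProj 0; PComp cT [PProj 1]]). simpl. intros p Dp n.
  destruct (Hc (phi p) (Hdom p Dp) n) as [[m Hm] Hcor]. split.
  - destruct (Henough p Dp m) as [m' E]. exists m'.
    econstructor; [|eauto]. repeat econstructor; simpl; try lia. rewrite <- E. apply HcT. auto.
  - intros m' k Hk.
    apply peval_PComp_inv in Hk as (ws & Hws & Hf).
    apply pevals_cons_inv in Hws as (w1 & ws1 & -> & H1 & Hws).
    apply pevals_cons_inv in Hws as (w2 & ws2 & -> & H2 & Hws). apply pevals_nil_inv in Hws; subst.
    apply peval_PProj_inv in H1; simpl in H1; subst.
    apply peval_PComp_inv in H2 as (ws & Hws & H2).
    apply pevals_cons_inv in Hws as (w3 & ws3 & -> & H3 & Hws). apply pevals_nil_inv in Hws; subst.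
    apply peval_PProj_inv in H3; simpl in H3; subst.
    apply HcT in H2. subst. destruct (Hsound p Dp m') as [m0 E]. rewrite E in Hf. eauto.
Qed.

Lemma computable_plus1 (K : pfun) :
  computable K -> computable (mkPfun (pdom K) (fun p => plus1 (papp K p))).
Proof.
  intros [c Hc].
  assert (Hg : recursive1 (fun z => ifz z 0 (S z))) by recursive_auto.
  destruct (recursive1_code _ Hg) as [cg Hcg].
  exists (PComp cg [c]). simpl. intros p Dp n. destruct (Hc p Dp n) as [[m Hm] Hcor]. split.
  - exists m. econstructor; [repeat econstructor; eauto|]. apply Hcg. reflexivity.
  - intros m' k Hk. apply peval_PComp_inv in Hk as (ws & Hws & Hf).
    apply pevals_cons_inv in Hws as (w & ws1 & -> & H1 & Hws). apply pevals_nil_inv in Hws; subst.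
    apply Hcg in Hf. destruct w as [|y]; simpl in Hf; [discriminate|]. injection Hf as ->.
    unfold plus1. f_equal. eauto.
Qed.

Fixpoint first_nonzero (F : nat -> nat) (n : nat) : nat :=
  match n with
  | 0 => 0
  | S k => ifz (first_nonzero F k) (F k) (first_nonzero F k)
  end.

Lemma first_nonzero_some F n y : first_nonzero F n = S y -> exists k, k < n /\ F k = S y.
Proof.
  induction n; simpl; intros E; [discriminate|]. unfold ifz in E.
  destruct (first_nonzero F n); [exists n; auto|].
  destruct (IHn E) as [k [? ?]]. exists k. split; auto.
Qed.

Lemma first_nonzero_pos F n k : k < n -> F k <> 0 -> first_nonzero F n <> 0.
Proof.
  intros L Fk. induction L; simpl; unfold ifz.
  - destruct (first_nonzero F k); auto; discriminate.
  - destruct (first_nonzero F m); auto; discriminate.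
Qed.

Lemma recursive3_first_nonzero g :
  recursive3 g -> recursive3 (fun n x y => first_nonzero (fun k => g k x y) n).
Proof.
  intros Hg.
  apply (recursive3_by_recursion _ (fun _ _ => 0) (fun k a x y => ifz a (g k x y) a)); auto;
    recursive_auto.
Qed.

(* [computable H] unfolds to [exists c, forall p, pdom H p -> announces c p (papp H p)]. *)
Definition announces (c : prcode) (p r : Baire) : Prop :=
  forall n, (exists m, peval c [n; enc_word (prefix p m)] (S (r n))) /\
            (forall m k, peval c [n; enc_word (prefix p m)] (S k) -> k = r n).

(* From a code [c] announcing the letters of [r = K p] we compute [r - 1]: search the
   coded prefix [w] for announcements of all letters up to the [n]-th nonzero one. *)
Section MinusOne.
Variable c : prcode.

Definition run_fuel (s j u : nat) : nat := enc_opt (eval_fuel s c [j; u]).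

Lemma recursive3_run_fuel : recursive3 run_fuel.
Proof.
  eapply recursive_ext; [apply (recursive_eval_coded c 2)|].
  intros [|s [|j [|u [|]]]] L; simpl in L; try lia. reflexivity.
Qed.

#[local] Hint Resolve recursive3_run_fuel : recursive.

(* [S] of the letter [j] as announced on some prefix of [w], with fuel [w]; [0] if none. *)
Definition announce (j w : nat) : nat :=
  first_nonzero (fun k => pred (run_fuel w j (word_dropr k w))) (S w).

Fixpoint all_announced (j w : nat) : nat :=
  match j with 0 => 1 | S j' => ifz (announce j' w) 0 (all_announced j' w) end.

Fixpoint count_nonzero (j w : nat) : nat :=
  match j with 0 => 0 | S j' => count_nonzero j' w + ifz (pred (announce j' w)) 0 1 end.

Definition shifted_letter (j n w : nat) : nat :=
  ifz (all_announced (S j) w) 0 (ifz (eqb_nat (count_nonzero j w) n) 0 (pred (announce j w))).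

Definition minus1_letter (n w : nat) : nat := first_nonzero (fun j => shifted_letter j n w) w.

Lemma recursive2_announce : recursive2 announce.
Proof.
  assert (H3 := recursive3_first_nonzero (fun k j w => pred (run_fuel w j (word_dropr k w)))
    ltac:(recursive_auto)).
  eapply recursive_ext.
  { apply (recursive_comp3 2 _ (fun v => S v#1) (fun v => v#0) (fun v => v#1) H3); recursive_auto. }
  reflexivity.
Qed.

#[local] Hint Resolve recursive2_announce : recursive.

Lemma recursive2_all_announced : recursive2 all_announced.
Proof.
  apply (recursive2_by_recursion all_announced (fun _ => 1) (fun j a w => ifz (announce j w) 0 a));
    auto; recursive_auto.
Qed.

Lemma recursive2_count_nonzero : recursive2 count_nonzero.
Proof.
  apply (recursive2_by_recursion count_nonzero (fun _ => 0)
    (fun j a w => a + ifz (pred (announce j w)) 0 1)); auto; recursive_auto.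
Qed.

#[local] Hint Resolve recursive2_all_announced recursive2_count_nonzero : recursive.

Lemma recursive2_minus1_letter : recursive2 minus1_letter.
Proof.
  assert (H3 : recursive3 shifted_letter) by (unfold shifted_letter; recursive_auto).
  eapply recursive_ext.
  { apply (recursive_comp3 2 _ (fun v => v#1) (fun v => v#0) (fun v => v#1)
      (recursive3_first_nonzero _ H3)); recursive_auto. }
  reflexivity.
Qed.

Variables (p r q : Baire).
Hypothesis Hr : announces c p r.
Hypothesis Hq : minus1 r q.

Lemma announce_correct M j y : announce j (enc_word (prefix p M)) = S y -> y = r j.
Proof.
  intros E. apply first_nonzero_some in E as [k [_ E]]. rewrite word_dropr_prefix in E.
  unfold run_fuel in E. destruct (eval_fuel _ c _) as [z|] eqn:Ez; simpl in E; [|discriminate].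
  subst z. apply eval_fuel_sound in Ez. exact (proj2 (Hr j) _ _ Ez).
Qed.

Lemma all_announced_spec j w : all_announced (S j) w <> 0 -> forall i, i <= j -> announce i w <> 0.
Proof.
  induction j; intros A i L; simpl in A; unfold ifz in A.
  - assert (i = 0) by lia. subst. destruct (announce 0 w); [lia|discriminate].
  - destruct (announce (S j) w) eqn:E; [lia|].
    destruct (Nat.eq_dec i (S j)); [subst; congruence|]. apply IHj; auto; lia.
Qed.

Lemma all_announced_pos j w : (forall i, i <= j -> announce i w <> 0) -> all_announced (S j) w = 1.
Proof.
  induction j; intros H; simpl; unfold ifz.
  - destruct (announce 0 w) eqn:E; auto. exfalso; apply (H 0); auto.
  - destruct (announce (S j) w) eqn:E; [exfalso; apply (H (S j)); auto|].
    apply IHj. intros; apply H; lia.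
Qed.

Lemma count_nonzero_spec M j : (forall i, i < j -> announce i (enc_word (prefix p M)) <> 0) ->
  count_nonzero j (enc_word (prefix p M)) = nz_count r j.
Proof.
  induction j; intros H; simpl; auto. rewrite IHj by (intros; apply H; lia).
  destruct (announce j (enc_word (prefix p M))) as [|y] eqn:E; [exfalso; apply (H j); auto|].
  apply announce_correct in E. subst. destruct (r j); reflexivity.
Qed.

Lemma shifted_letter_correct M j n k : shifted_letter j n (enc_word (prefix p M)) = S k -> k = q n.
Proof.
  unfold shifted_letter, ifz. set (w := enc_word (prefix p M)).
  destruct (all_announced (S j) w) eqn:A; [discriminate|].
  unfold eqb_nat. destruct (Nat.eqb_spec (count_nonzero j w) n) as [C|]; [|discriminate].
  intros E. destruct (announce j w) as [|[|y]] eqn:F; simpl in E; try discriminate.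
  injection E as ->. apply announce_correct in F.
  unfold w in C. rewrite count_nonzero_spec in C.
  2: { intros i Hi. apply (all_announced_spec j w); [rewrite A; discriminate|lia]. }
  pose proof (minus1_at _ _ j Hq) as G. rewrite <- F, C in G. specialize (G ltac:(lia)). congruence.
Qed.

Lemma announce_bound N : exists B, forall j, j <= N -> exists m s, m <= B /\ s <= B /\
    eval_fuel s c [j; enc_word (prefix p m)] = Some (S (r j)).
Proof.
  destruct (uniform_bound (fun B j => exists m s, m <= B /\ s <= B /\
      eval_fuel s c [j; enc_word (prefix p m)] = Some (S (r j))) (S N)) as [B HB].
  - intros j B B' (m & s & ? & ? & E) L. exists m, s. repeat split; auto; lia.
  - intros j _. destruct (proj1 (Hr j)) as [m Hm]. destruct (eval_fuel_complete _ _ _ Hm) as [s Hs].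
    exists (m + s), m, s. repeat split; auto; lia.
  - exists B. intros j L. apply HB. lia.
Qed.

Lemma minus1_letter_exists n : exists M, minus1_letter n (enc_word (prefix p M)) = S (q n).
Proof.
  destruct (Hq n) as [n0 [Q0 N0]]. destruct (announce_bound n0) as [B HB].
  exists (B + n0 + 1). set (M := B + n0 + 1). set (w := enc_word (prefix p M)).
  assert (Mw : M <= w) by (unfold w; rewrite <- (length_prefix p M) at 1; apply length_le_enc_word).
  assert (Ann : forall j, j <= n0 -> announce j w = S (r j)).
  { intros j L. destruct (HB j L) as (m & s & Lm & Ls & E).
    destruct (announce j w) as [|y] eqn:A.
    - exfalso. revert A. apply (first_nonzero_pos _ _ (M - m)); [lia|].
      unfold w. rewrite word_dropr_prefix. replace (M - (M - m)) with m by lia. unfold run_fuel.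
      rewrite (eval_fuel_mono _ _ _ _ _ E); simpl; lia.
    - unfold w in A. apply announce_correct in A. congruence. }
  assert (Al : all_announced (S n0) w = 1) by (apply all_announced_pos; intros; rewrite Ann; auto).
  assert (Cn : count_nonzero n0 w = n).
  { unfold w. rewrite count_nonzero_spec; auto.
    intros i Hi. unfold w in Ann. rewrite Ann; [auto|lia]. }
  assert (Tm : shifted_letter n0 n w = S (q n)).
  { unfold shifted_letter, eqb_nat. rewrite Al, Cn, Nat.eqb_refl. simpl. rewrite Ann; auto. }
  unfold minus1_letter. destruct (first_nonzero _ w) as [|k] eqn:O.
  - exfalso. revert O. apply (first_nonzero_pos _ _ n0); [lia|congruence].
  - apply first_nonzero_some in O as [j' [_ Tj]]. apply shifted_letter_correct in Tj. congruence.
Qed.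

Lemma minus1_letter_correct n M k : minus1_letter n (enc_word (prefix p M)) = S k -> k = q n.
Proof.
  unfold minus1_letter. intros O. apply first_nonzero_some in O as [j [_ Tj]].
  eapply shifted_letter_correct; eauto.
Qed.

End MinusOne.

Lemma computable_minus1 (K : pfun) (D : Baire -> Prop) (phi : Baire -> Baire) :
  computable K -> (forall p, D p -> pdom K p /\ minus1 (papp K p) (phi p)) ->
  computable (mkPfun D phi).
Proof.
  intros [c Hc] HD. destruct (recursive2_minus1_letter c) as [co Hco].
  exists co. simpl. intros p Dp n. destruct (HD p Dp) as [DK Mq].
  assert (Hout : forall m,
    peval co [n; enc_word (prefix p m)] (minus1_letter c n (enc_word (prefix p m))))
    by (intros m; apply (Hco [n; _]); auto).
  split.
  - destruct (minus1_letter_exists c p (papp K p) (phi p) (Hc p DK) Mq n) as [M HM].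
    exists M. rewrite <- HM. apply Hout.
  - intros m k Hk. apply (minus1_letter_correct c p (papp K p) (phi p) (Hc p DK) Mq n m).
    eapply peval_functional; [apply Hout|exact Hk].
Qed.

(** * Diverse problems and trivial instances *)

Definition update_at (G : pfun) (q r : Baire) : pfun :=
  mkPfun (fun s => s = q \/ pdom G s)
         (fun s => if excluded_middle_informative (s = q) then r else papp G s).

Definition trivial_at {U V} (dU : Baire -> U -> Prop) (R : U -> V -> Prop) (q : Baire) : Prop :=
  forall u, dU q u -> pdomain R u -> forall v, R u v.

Lemma realizes_update_trivial {U V} (dU : Baire -> U -> Prop) (dV : Baire -> V -> Prop) R G q r v :
  realizes dU dV G R -> trivial_at dU R q -> dV r v -> realizes dU dV (update_at G q r) R.
Proof.
  intros HG Hq Hr s u Hs Hu. simpl. destruct excluded_middle_informative as [->|E].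
  - split; auto. exists v. split; auto.
  - destruct (HG s u Hs Hu). split; auto.
Qed.

Lemma realizes_update_unnamed {U V} (dU : Baire -> U -> Prop) (dV : Baire -> V -> Prop) R G q r :
  realizes dU dV G R -> (forall u, dU q u -> ~ pdomain R u) -> realizes dU dV (update_at G q r) R.
Proof.
  intros HG Hq s u Hs Hu. simpl. destruct excluded_middle_informative as [->|E].
  - exfalso. exact (Hq u Hs Hu).
  - destruct (HG s u Hs Hu). split; auto.
Qed.

Lemma diverse_query_nontrivial {X Y U V} (dX : Baire -> X -> Prop) (dY : Baire -> Y -> Prop)
  (f : X -> Y -> Prop) (dU : Baire -> U -> Prop) (dV : Baire -> V -> Prop) (R : U -> V -> Prop)
  (H K G0 : pfun) p x :
  rep_surjective dX -> rep_functional dY -> diverse f ->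
  (forall G, realizes dU dV G R -> realizes dX dY (compose3 H G K) f) ->
  realizes dU dV G0 R -> dX p x -> pdomain f x -> ~ trivial_at dU R (papp K p).
Proof.
  intros SX FY Dv Red HG0 Hp Hx Triv.
  destruct (Dv x Hx) as [y [Hy Disj]]. destruct (SX y) as [p' Hp'].
  assert (Clash : forall G1 G2, realizes dU dV G1 R -> realizes dU dV G2 R ->
            papp G1 (papp K p) <> papp G2 (papp K p')).
  { intros G1 G2 R1 R2 E.
    destruct (Red G1 R1 p x Hp Hx) as [_ [z [Hz fz]]].
    destruct (Red G2 R2 p' y Hp' Hy) as [_ [z' [Hz' fz']]].
    simpl in Hz, Hz'. rewrite E in Hz. assert (z = z') by (eapply FY; eauto). subst.
    apply (Disj z'); auto. }
  destruct (classic (exists u, dU (papp K p') u /\ pdomain R u)) as [[u [Hu Du]]|ND].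
  - destruct (HG0 _ u Hu Du) as [_ [v [Hv _]]].
    apply (Clash (update_at G0 (papp K p) (papp G0 (papp K p'))) G0);
      eauto using realizes_update_trivial.
    simpl. destruct excluded_middle_informative; tauto.
  - apply (Clash G0 (update_at G0 (papp K p') (papp G0 (papp K p)))); auto.
    + apply realizes_update_unnamed; eauto.
    + simpl. destruct excluded_middle_informative; tauto.
Qed.

(** * Completions *)

Lemma bar_delta_total {X} (d : Baire -> X -> Prop) p : exists x, bar_delta d p x.
Proof.
  destruct (classic (exists q x', minus1 p q /\ d q x')) as [[q [x' [M Hd]]]|N].
  - exists (Some x'). simpl. eauto.
  - exists None. simpl. auto.
Qed.

Lemma bar_delta_plus1 {X} (d : Baire -> X -> Prop) q x : d q x -> bar_delta d (plus1 q) (Some x).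
Proof. intros Hx. exists q. split; auto using minus1_plus1. Qed.

Lemma nontrivial_completion {U V} (dU : Baire -> U -> Prop) (g : U -> V -> Prop) q :
  ~ trivial_at (bar_delta dU) (completion g) q ->
  exists q' u, minus1 q q' /\ dU q' u /\ pdomain g u.
Proof.
  intros NT. apply NNPP. intros N. apply NT. intros [u|] Hq _ vb; simpl; auto.
  intros Du. exfalso. destruct Hq as [q' [M Hu]]. apply N. exists q', u. auto.
Qed.

Lemma realizes_completion {U V} (dU : Baire -> U -> Prop) (dV : Baire -> V -> Prop)
  (g : U -> V -> Prop) (G : pfun) :
  rep_functional dU -> realizes dU dV G g ->
  realizes (bar_delta dU) (bar_delta dV)
    (mkPfun (fun _ => True) (fun q => plus1 (papp G (minus1_fun q)))) (completion g).
Proof.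
  intros FU HG q ub Hq _. split; [exact I|]. simpl.
  destruct ub as [u|].
  - destruct Hq as [q' [M Hu]]. rewrite (minus1_fun_spec _ _ M).
    destruct (classic (pdomain g u)) as [Du|NDu].
    + destruct (HG q' u Hu Du) as [_ [v [Hv guv]]].
      exists (Some v). split; [apply bar_delta_plus1; auto|]. simpl. eauto.
    + destruct (bar_delta_total dV (plus1 (papp G q'))) as [vb Hvb].
      exists vb. split; auto. simpl. tauto.
  - destruct (bar_delta_total dV (plus1 (papp G (minus1_fun q)))) as [vb Hvb].
    exists vb. split; auto. exact I.
Qed.

Lemma realizes_of_completion {U V} (dU : Baire -> U -> Prop) (dV : Baire -> V -> Prop)
  (g : U -> V -> Prop) (G : pfun) :
  realizes (bar_delta dU) (bar_delta dV) G (completion g) ->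
  realizes dU dV
    (mkPfun (fun r => pdom G (plus1 r) /\ exists r', minus1 (papp G (plus1 r)) r')
            (fun r => minus1_fun (papp G (plus1 r)))) g.
Proof.
  intros HG r u Hr Du. simpl.
  assert (Dc : pdomain (completion g) (Some u)).
  { destruct Du as [v gv]. exists (Some v). simpl. eauto. }
  destruct (HG (plus1 r) (Some u) (bar_delta_plus1 _ _ _ Hr) Dc) as [DG [vb [Hvb C]]].
  simpl in C. destruct (C Du) as [v [-> guv]].
  destruct Hvb as [r' [M Hv]]. rewrite (minus1_fun_spec _ _ M).
  split; eauto.
Qed.

Lemma sW_le_of_completion {X Y U V} (dX : Baire -> X -> Prop) (dY : Baire -> Y -> Prop)
  (f : X -> Y -> Prop) (dU : Baire -> U -> Prop) (dV : Baire -> V -> Prop) (g : U -> V -> Prop) :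
  rep_surjective dX -> rep_functional dY -> rep_functional dU -> diverse f ->
  sW_le dX dY f (bar_delta dU) (bar_delta dV) (completion g) -> sW_le dX dY f dU dV g.
Proof.
  intros SX FY FU Dv [H [K [cH [cK Red]]]].
  exists (mkPfun (fun r => pdom H (plus1 r)) (fun r => papp H (plus1 r))).
  exists (mkPfun (fun p => pdom K p /\ exists q', minus1 (papp K p) q')
                 (fun p => minus1_fun (papp K p))).
  split; [|split].
  - apply (computable_precomp H word_map_S plus1); auto using recursive1_word_map_S;
      intros p _ m; exists m; rewrite word_map_S_enc, prefix_plus1; reflexivity.
  - apply computable_minus1 with K; auto.
    intros p [D [q' M]]. rewrite (minus1_fun_spec _ _ M). auto.
  - intros G HG p x Hp Hx.
    pose proof (realizes_completion dU dV g G FU HG) as HG'.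
    destruct (nontrivial_completion dU g (papp K p)
      (diverse_query_nontrivial dX dY f _ _ _ H K _ p x SX FY Dv Red HG' Hp Hx))
      as (q' & u & M & Hu & Du).
    destruct (Red _ HG' p x Hp Hx) as [[DK [_ DH]] [z [Hz fz]]].
    simpl in *. rewrite (minus1_fun_spec _ _ M) in *.
    destruct (HG q' u Hu Du) as [DG _].
    repeat split; eauto.
Qed.

Lemma sW_le_completion {X Y U V} (dX : Baire -> X -> Prop) (dY : Baire -> Y -> Prop)
  (f : X -> Y -> Prop) (dU : Baire -> U -> Prop) (dV : Baire -> V -> Prop) (g : U -> V -> Prop) :
  sW_le dX dY f dU dV g -> sW_le dX dY f (bar_delta dU) (bar_delta dV) (completion g).
Proof.
  intros [H [K [cH [cK Red]]]].
  exists (mkPfun (fun r => exists r', minus1 r r' /\ pdom H r') (fun r => papp H (minus1_fun r))).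
  exists (mkPfun (pdom K) (fun p => plus1 (papp K p))).
  split; [|split].
  - apply (computable_precomp H word_minus1 minus1_fun); auto using recursive1_word_minus1.
    + intros p [r' [M D]]. rewrite (minus1_fun_spec _ _ M). auto.
    + intros p [r' [M D]] m. rewrite (minus1_fun_spec _ _ M). destruct (M m) as [n0 [_ N0]].
      exists n0. rewrite word_minus1_enc, (list_minus1_prefix _ r'), N0; auto.
    + intros p [r' [M D]] m. rewrite (minus1_fun_spec _ _ M). exists (nz_count p m).
      rewrite word_minus1_enc, (list_minus1_prefix _ r'); auto.
  - apply computable_plus1; auto.
  - intros G HG p x Hp Hx.
    destruct (Red _ (realizes_of_completion dU dV g G HG) p x Hp Hx)
      as [[DK [[DG [r' M]] DH]] [z [Hz fz]]].
    simpl in *. rewrite (minus1_fun_spec _ _ M) in *.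
    repeat split; eauto.
Qed.

(** * Totalizations *)

Definition some_name {V} (dV : Baire -> V -> Prop) : Baire :=
  epsilon (inhabits (fun _ => 0)) (fun r => exists v, dV r v).

Lemma some_name_spec {V} (dV : Baire -> V -> Prop) r v : dV r v -> exists v', dV (some_name dV) v'.
Proof.
  intros Hv. apply (epsilon_spec (inhabits (fun _ => 0)) (fun r => exists v, dV r v)). eauto.
Qed.

Lemma nontrivial_totalization {U V} (dU : Baire -> U -> Prop) (g : U -> V -> Prop) q :
  ~ trivial_at dU (totalization g) q -> exists u, dU q u /\ pdomain g u.
Proof.
  intros NT. apply NNPP. intros N. apply NT. intros u Hq _ v Du. exfalso. eauto.
Qed.

Lemma realizes_totalization {U V} (dU : Baire -> U -> Prop) (dV : Baire -> V -> Prop)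
  (g : U -> V -> Prop) (G : pfun) :
  rep_functional dU -> rep_surjective dV -> realizes dU dV G g ->
  realizes dU dV
    (mkPfun (fun _ => True)
       (fun q => if excluded_middle_informative (exists u, dU q u /\ pdomain g u)
                 then papp G q else some_name dV)) (totalization g).
Proof.
  intros FU SV HG q u Hq Du. split; [exact I|]. simpl.
  destruct excluded_middle_informative as [[u' [Hu' Du']]|NA].
  - destruct (HG q u' Hu' Du') as [_ [v [Hv guv]]].
    exists v. split; auto. intros _. rewrite (FU _ _ _ Hq Hu'). auto.
  - destruct Du as [v0 _]. destruct (SV v0) as [r0 Hr0].
    destruct (some_name_spec dV r0 v0 Hr0) as [v Hv].
    exists v. split; auto. intros Dg. exfalso. eauto.
Qed.

Lemma sW_le_of_totalization {X Y U V} (dX : Baire -> X -> Prop) (dY : Baire -> Y -> Prop)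
  (f : X -> Y -> Prop) (dU : Baire -> U -> Prop) (dV : Baire -> V -> Prop) (g : U -> V -> Prop) :
  rep_surjective dX -> rep_functional dY -> rep_functional dU -> rep_surjective dV -> diverse f ->
  sW_le dX dY f dU dV (totalization g) -> sW_le dX dY f dU dV g.
Proof.
  intros SX FY FU SV Dv [H [K [cH [cK Red]]]].
  exists H, K. split; [|split]; auto.
  intros G HG p x Hp Hx.
  pose proof (realizes_totalization dU dV g G FU SV HG) as HG'.
  destruct (nontrivial_totalization dU g (papp K p)
    (diverse_query_nontrivial dX dY f _ _ _ H K _ p x SX FY Dv Red HG' Hp Hx)) as [u [Hu Du]].
  destruct (Red _ HG' p x Hp Hx) as [[DK [_ DH]] [z [Hz fz]]].
  simpl in *. destruct excluded_middle_informative as [_|NA]; [|exfalso; eauto].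
  destruct (HG _ u Hu Du) as [DG _].
  repeat split; eauto.
Qed.

Lemma sW_le_totalization {X Y U V} (dX : Baire -> X -> Prop) (dY : Baire -> Y -> Prop)
  (f : X -> Y -> Prop) (dU : Baire -> U -> Prop) (dV : Baire -> V -> Prop) (g : U -> V -> Prop) :
  sW_le dX dY f dU dV g -> sW_le dX dY f dU dV (totalization g).
Proof.
  intros [H [K [cH [cK Red]]]]. exists H, K. split; [|split]; auto.
  intros G HG. apply Red. intros q u Hq [v gv].
  assert (Dt : pdomain (totalization g) u) by (exists v; intros _; auto).
  destruct (HG q u Hq Dt) as [D [v' [Hv' Tv']]].
  split; auto. exists v'. split; auto. apply Tv'. exists v. auto.
Qed.

Theorem proposition4p13 :
  forall (X Y : Type) (dX : Baire -> X -> Prop) (dY : Baire -> Y -> Prop)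
         (f : X -> Y -> Prop),
    is_rep dX -> is_rep dY -> diverse f ->
    (forall (U V : Type) (dU : Baire -> U -> Prop) (dV : Baire -> V -> Prop)
            (g : U -> V -> Prop),
        is_rep dU -> is_rep dV ->
        (sW_le dX dY f (bar_delta dU) (bar_delta dV) (completion g)
         <-> sW_le dX dY f dU dV g)) /\
    (rep_total dY ->
     forall (U V : Type) (dU : Baire -> U -> Prop) (dV : Baire -> V -> Prop)
            (g : U -> V -> Prop),
        is_rep dU -> is_rep dV ->
        (sW_le dX dY f dU dV (totalization g) <-> sW_le dX dY f dU dV g)).
Proof.
  intros X Y dX dY f [_ SX] [FY _] Dv. split.
  - intros U V dU dV g [FU _] _. split.
    + apply sW_le_of_completion; auto.
    + apply sW_le_completion.
  -
    intros _ U V dU dV g [FU _] [_ SV]. split.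
    + apply sW_le_of_totalization; auto.
    + apply sW_le_totalization.
Qed.
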